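(* Let $L_1,L_2,L_3$ be lines of the spine space $\mathfrak M$ which are pairwise coplanar, whose closures $\overline{L_1},\overline{L_2},\overline{L_3}$ have a common point (proper or improper; i.e. the lines are concurrent or parallel), and which are not all contained in one plane of $\mathfrak M$. Then $L_1,L_2,L_3$ are all contained in one star or in one top of $\mathfrak M$.
   Context: Setup. Let $V$ be a vector space of finite dimension $n\ge 3$ over a division ring; $\mathrm{Sub}_j(V)$ is the set of $j$-dimensional subspaces of $V$. Fix $k$ with $1<k<n-1$, a subspace $W$ of $V$ with $w:=\dim W$, and an integer $m$ with $k-(n-w)\le m\le\min\{k,w\}$. For $H\in\mathrm{Sub}_{k-1}(V)$, $B\in\mathrm{Sub}_{k+1}(V)$, $H\subset B$, the $k$-pencil is $\mathbf p(H,B)=\{U\in\mathrm{Sub}_k(V):H\subset U\subset B\}$; the Grassmann space $\mathbf P_k(V)$ has points $\mathrm{Sub}_k(V)$ and lines the $k$-pencils. The spine space $\mathfrak M$ has point set $S=\{U\in\mathrm{Sub}_k(V):\dim(U\cap W)=m\}$ and line set $\mathcal L=\{\ell\cap S:\ell\text{ a $k$-pencil},\ |\ell\cap S|\ge2\}$; points of $\mathrm{Sub}_k(V)\setminus S$ are improper. Each $L\in\mathcal L$ lies in a unique $k$-pencil $\overline L$ (its closure); $L$ is projective if $L=\overline L$, affine if $|\overline L\setminus L|=1$. Affine lines are parallel if their closures meet in an improper point. A plane of $\mathbf P_k(V)$ is a set $\{U\in\mathrm{Sub}_k(V):Y\subset U\subset Z\}$ with $(\dim Y,\dim Z)=(k-2,k+1)$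 or $(k-1,k+2)$; a plane of $\mathfrak M$ is a set $E=P\cap S$ with $P$ a plane of $\mathbf P_k(V)$, containing two distinct lines of $\mathfrak M$; write $\overline E=P$. Lines $L_1,L_2$ are coplanar ($L_1\,\boldsymbol\pi\,L_2$) if some plane of $\mathfrak M$ contains both. The maximal strong subspaces (maximal sets of pairwise collinear points) of $\mathfrak M$ are: $\omega$-stars $\{U\in\mathrm{Sub}_k(V):H\subset U\subset H+W\}$ ($H\in\mathrm{Sub}_{k-1}(V)$, $\dim(H\cap W)=m-1$); $\alpha$-stars $\{U\in S:H\subset U\}$ ($H\in\mathrm{Sub}_{k-1}(V)$, $\dim(H\cap W)=m$); $\alpha$-tops $\{U\in\mathrm{Sub}_k(V):B\cap W\subset U\subset B\}$ ($B\in\mathrm{Sub}_{k+1}(V)$, $\dim(B\cap W)=m$); $\omega$-tops $\{U\in S:U\subset B\}$ ($B\in\mathrm{Sub}_{k+1}(V)$, $\dim(B\cap W)=m+1$). Stars are $\omega$- and $\alpha$-stars; tops are $\alpha$- and $\omega$-tops. *)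

From HB Require Import structures.
From mathcomp Require Import all_boot all_order all_algebra.
Set Implicit Arguments. Unset Strict Implicit. Unset Printing Implicit Defensive.
Import GRing.Theory.
Local Open Scope ring_scope.

Definition division_ring (K : unitRingType) : Prop :=
  forall x : K, x != 0 -> x \is a GRing.unit.

Section Spine.
Variables (K : unitRingType) (n : nat).

(* The n-dimensional (left) vector space V = K^n, row vectors, left scaling.
   A "subset" of V is a Prop-valued predicate. *)
Definition vsub := 'rV[K]_n -> Prop.

Definition is_subspace (X : vsub) : Prop :=
  X 0 /\ (forall x y, X x -> X y -> X (x + y)) /\
  (forall (a : K) x, X x -> X (a *: x)).

Definition incl (X Y : vsub) : Prop := forall x, X x -> Y x.
Definition sseq (X Y : vsub) : Prop := incl X Y /\ incl Y X.
Definition scap (X Y : vsub) : vsub := fun x => X x /\ Y x.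
Definition ssum (X Y : vsub) : vsub :=
  fun x => exists a b, X a /\ Y b /\ x = a + b.

Definition has_dim (X : vsub) (d : nat) : Prop :=
  is_subspace X /\
  exists v : 'I_d -> 'rV[K]_n,
    (forall i, X (v i)) /\
    (forall c : 'I_d -> K, \sum_(i < d) c i *: v i = 0 -> forall i, c i = 0) /\
    (forall x, X x -> exists c : 'I_d -> K, x = \sum_(i < d) c i *: v i).

Variables (k : nat) (W : vsub) (m : nat).

Definition in_S (U : vsub) : Prop := has_dim U k /\ has_dim (scap U W) m.

Definition pencil (H B : vsub) (U : vsub) : Prop :=
  has_dim U k /\ incl H U /\ incl U B.

Definition is_kpencil (H B : vsub) : Prop :=
  has_dim H (k - 1) /\ has_dim B (k + 1) /\ incl H B.

Definition lineset (H B : vsub) (U : vsub) : Prop := pencil H B U /\ in_S U.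

(* p(H,B) ∩ S is a line of M (it has at least two points); its closure is
   then p(H,B). *)
Definition is_Mline (H B : vsub) : Prop :=
  is_kpencil H B /\
  exists U1 U2, lineset H B U1 /\ lineset H B U2 /\ ~ sseq U1 U2.

Definition is_kplane (Y Z : vsub) : Prop :=
  incl Y Z /\
  ((has_dim Y (k - 2) /\ has_dim Z (k + 1)) \/
   (has_dim Y (k - 1) /\ has_dim Z (k + 2))).

Definition plane_pt (Y Z : vsub) (U : vsub) : Prop :=
  has_dim U k /\ incl Y U /\ incl U Z.

Definition line_in_plane (H B Y Z : vsub) : Prop :=
  forall U, lineset H B U -> plane_pt Y Z U.

Definition is_Mplane (Y Z : vsub) : Prop :=
  is_kplane Y Z /\
  exists H B H' B',
    is_Mline H B /\ is_Mline H' B' /\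
    line_in_plane H B Y Z /\ line_in_plane H' B' Y Z /\
    ~ (forall U, lineset H B U <-> lineset H' B' U).

Definition coplanar (H1 B1 H2 B2 : vsub) : Prop :=
  exists Y Z, is_Mplane Y Z /\ line_in_plane H1 B1 Y Z /\ line_in_plane H2 B2 Y Z.

(* The four kinds of maximal strong subspaces, as point sets. *)
Definition omega_star (X : vsub -> Prop) : Prop :=
  exists H : vsub, exists d : nat,
    has_dim H (k - 1) /\ has_dim (scap H W) d /\ d.+1 = m /\
    forall U, X U <-> (has_dim U k /\ incl H U /\ incl U (ssum H W)).

Definition alpha_star (X : vsub -> Prop) : Prop :=
  exists H : vsub,
    has_dim H (k - 1) /\ has_dim (scap H W) m /\
    forall U, X U <-> (in_S U /\ incl H U).

Definition alpha_top (X : vsub -> Prop) : Prop :=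
  exists B : vsub,
    has_dim B (k + 1) /\ has_dim (scap B W) m /\
    forall U, X U <-> (has_dim U k /\ incl (scap B W) U /\ incl U B).

Definition omega_top (X : vsub -> Prop) : Prop :=
  exists B : vsub,
    has_dim B (k + 1) /\ has_dim (scap B W) m.+1 /\
    forall U, X U <-> (in_S U /\ incl U B).

Definition is_star (X : vsub -> Prop) : Prop := omega_star X \/ alpha_star X.
Definition is_top (X : vsub -> Prop) : Prop := alpha_top X \/ omega_top X.

End Spine.

(* Two coplanar lines of the Grassmann space share their lower subspace H
   (plane of type (k-1, k+2)) or their upper subspace B (type (k-2, k+1)),
   because two distinct k-spaces determine both their sum and their
   intersection.  For three pairwise coplanar lines this forces a common H or
   a common B.  The points of S through a (k-1)-space H form an alpha-star or
   an omega-star according as dim (H :&: W) is m or m - 1, and dually the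
   points of S inside a (k+1)-space B form an alpha-top or an omega-top. *)

From mathcomp Require Import all_boot all_order all_algebra.
From Stdlib Require Import Classical.
Set Implicit Arguments. Unset Strict Implicit. Unset Printing Implicit Defensive.
Import GRing.Theory.
Local Open Scope ring_scope.

Section Subspaces.
Variables (K : unitRingType) (n : nat).
Hypothesis divK : division_ring K.
Implicit Types (X Y Z A B C U H W : vsub K n) (z : 'rV[K]_n).

Lemma rows_dependent (I : finType) d (a : I -> 'I_d -> K) (A : {set I}) :
  (d < #|A|)%N ->
  exists c : I -> K, (forall j, \sum_(i in A) c i * a i j = 0) /\
    exists2 i, i \in A & c i != 0.
Proof.
elim: d a A => [|d IH] a A ltdA.
  have [p pA] : exists p, p \in A by apply/set0Pn; rewrite -card_gt0.
  exists (fun i => if i == p then 1 else 0); split; first by case.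
  by exists p; rewrite // eqxx oner_neq0.
have last_col0 (b : I -> 'I_d.+1 -> K) (B : {set I}) : (d < #|B|)%N ->
    (forall i, i \in B -> b i ord_max = 0) ->
    exists c : I -> K, (forall j, \sum_(i in B) c i * b i j = 0) /\
      exists2 i, i \in B & c i != 0.
  move=> ltdB b0.
  have [c [cb c_nz]] := IH (fun i j => b i (widen_ord (leqnSn d) j)) B ltdB.
  exists c; split => // j; have [ltjd|] := ltnP j d.
    by have -> : j = widen_ord (leqnSn d) (Ordinal ltjd) by apply: val_inj.
  move=> ledj.
  have -> : j = ord_max by apply/val_inj/eqP; rewrite eqn_leq ledj -ltnS ltn_ord.
  by rewrite big1 // => i iB; rewrite b0 // mulr0.
case: (pickP (fun p => (p \in A) && (a p ord_max != 0))) => [p /andP[pA ap_nz]|]; last first.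
  move=> a0; apply: last_col0 => [|i iA]; first exact: ltnW.
  by apply/eqP; move: (a0 i); rewrite iA /= => /negbFE.
(* Gaussian elimination: clear the last column with the pivot row [p]. *)
have ap_unit : a p ord_max \is a GRing.unit by apply: divK.
pose t i := a i ord_max * (a p ord_max)^-1.
have ltdAp : (d < #|A :\ p|)%N by move: ltdA; rewrite (cardsD1 p A) pA add1n ltnS.
have cleared i : i \in A :\ p -> a i ord_max - t i * a p ord_max = 0.
  by rewrite /t -mulrA mulVr // mulr1 subrr.
have [c [cb [i0 i0A ci0]]] := last_col0 (fun i j => a i j - t i * a p j) _ ltdAp cleared.
exists (fun i => if i == p then - \sum_(i in A :\ p) c i * t i else c i); split.
  move=> j; rewrite (bigD1 p pA) /= eqxx.
  have -> : \sum_(i in A | i != p)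
      (if i == p then - \sum_(i in A :\ p) c i * t i else c i) * a i j
      = \sum_(i in A :\ p) c i * a i j.
    apply: eq_big => [i|i /andP[_ /negbTE ->] //]; by rewrite !inE andbC.
  have -> : \sum_(i in A :\ p) c i * a i j =
      \sum_(i in A :\ p) c i * (a i j - t i * a p j) + (\sum_(i in A :\ p) c i * t i) * a p j.
    rewrite mulr_suml -big_split /=; apply: eq_bigr => i _.
    by rewrite mulrBr -mulrA subrK.
  by rewrite cb add0r mulNr addNr.
by move: i0A; rewrite !inE => /andP[/negbTE i0p i0A]; exists i0; rewrite ?i0p.
Qed.

Lemma span_not_free d m (v : 'I_d -> 'rV[K]_n) (e : 'I_m -> 'rV[K]_n) :
  (d < m)%N -> (forall i, exists c : 'I_d -> K, e i = \sum_j c j *: v j) ->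
  ~ (forall c : 'I_m -> K, \sum_(i < m) c i *: e i = 0 -> forall i, c i = 0).
Proof.
move=> ltdm e_span e_free.
have [a ea] := fin_all_exists e_span.
have ltd_m : (d < #|[set: 'I_m]|)%N by rewrite cardsT card_ord.
have [c [ca [i0 _]]] := rows_dependent a ltd_m.
apply/negP; rewrite negbK; apply/eqP; apply: (e_free c).
transitivity (\sum_(j < d) (\sum_(i in [set: 'I_m]) c i * a i j) *: v j).
  under eq_bigr do rewrite ea scaler_sumr.
  rewrite exchange_big /=; apply: eq_bigr => j _; rewrite scaler_suml.
  by apply: eq_big => [i|i _]; rewrite ?in_setT ?scalerA.
by rewrite big1 // => j _; rewrite ca scale0r.
Qed.

Lemma has_dim_leq X Y a b : has_dim X a -> has_dim Y b -> incl X Y -> (a <= b)%N.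
Proof.
move=> [_ [u [uX [u_free _]]]] [_ [v [_ [_ v_span]]]] XY.
rewrite leqNgt; apply/negP => ltba.
by apply: (span_not_free ltba _ u_free) => i; apply: v_span; apply: XY.
Qed.

Definition adjoin X z : vsub K n := fun x => exists a c, X c /\ x = c + a *: z.

Lemma adjoin_subspace X z : is_subspace X -> is_subspace (adjoin X z).
Proof.
move=> [X0 [XD XZ]]; split; first by exists 0, 0; rewrite scale0r addr0.
split.
  move=> _ _ [a [c [Xc ->]]] [b [e [Xe ->]]]; exists (a + b), (c + e).
  by rewrite scalerDl addrACA; split; first exact: XD.
move=> s _ [a [c [Xc ->]]]; exists (s * a), (s *: c).
by rewrite scalerDr scalerA; split; first exact: XZ.
Qed.

Lemma adjoin_incl X Y z : is_subspace Y -> incl X Y -> Y z -> incl (adjoin X z) Y.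
Proof.
by move=> [_ [YD YZ]] XY Yz _ [a [c [Xc ->]]]; apply: YD; [apply: XY | apply: YZ].
Qed.

Definition ocons (T : Type) d (z : T) (f : 'I_d -> T) (j : 'I_d.+1) : T :=
  if unlift ord0 j is Some j' then f j' else z.

Lemma ocons0 (T : Type) d (z : T) (f : 'I_d -> T) : ocons z f ord0 = z.
Proof. by rewrite /ocons unlift_none. Qed.

Lemma ocons_lift (T : Type) d (z : T) (f : 'I_d -> T) j : ocons z f (lift ord0 j) = f j.
Proof. by rewrite /ocons liftK. Qed.

Lemma has_dim_adjoin X d z : has_dim X d -> ~ X z -> has_dim (adjoin X z) d.+1.
Proof.
move=> [Xs [v [vX [v_free v_span]]]] Xz_n; have [X0 [XD XZ]] := Xs.
have X_comb (c : 'I_d -> K) : X (\sum_i c i *: v i).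
  by elim/big_ind: _ => // i _; apply: XZ.
split; first exact: adjoin_subspace.
exists (ocons z v); split; last split.
- move=> j; rewrite /ocons; case: (unlift _ j) => [j'|].
    by exists 0, (v j'); rewrite scale0r addr0.
  by exists 1, 0; rewrite scale1r add0r.
- move=> c; rewrite big_ord_recl ocons0; under eq_bigr do rewrite ocons_lift.
  move=> rel.
  have c0 : c ord0 = 0.
    have [//|/divK c0_unit] := eqVneq (c ord0) 0; case: Xz_n.
    have -> : z = (c ord0)^-1 *: - \sum_(i < d) c (lift ord0 i) *: v i.
      have -> : - \sum_(i < d) c (lift ord0 i) *: v i = c ord0 *: z.
        by apply/eqP; rewrite eq_sym -subr_eq0 opprK rel.
      by rewrite scalerA mulVr // scale1r.
    by apply: (XZ); rewrite -scaleN1r; apply: (XZ).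
  move: rel; rewrite c0 scale0r add0r => /v_free c_lift0 j.
  by case: (unliftP ord0 j) => [j' ->|->].
- move=> _ [a [c [Xc ->]]]; have [b ->] := v_span _ Xc.
  exists (ocons a b); rewrite big_ord_recl addrC !ocons0; congr (_ + _).
  by apply: eq_bigr => j _; rewrite !ocons_lift.
Qed.

Lemma incl_same_dim X Y d : has_dim X d -> has_dim Y d -> incl X Y -> incl Y X.
Proof.
move=> hX hY XY y Yy; apply: NNPP => Xy_n.
have := has_dim_leq (has_dim_adjoin hX Xy_n) hY (adjoin_incl hY.1 XY Yy).
by rewrite ltnn.
Qed.

Lemma hyperplane_adjoin X Y d z :
  has_dim X d -> has_dim Y d.+1 -> incl X Y -> Y z -> ~ X z -> incl Y (adjoin X z).
Proof.
move=> hX hY XY Yz Xz_n.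
exact: incl_same_dim (has_dim_adjoin hX Xz_n) hY (adjoin_incl hY.1 XY Yz).
Qed.

Lemma has_dim_full : has_dim (fun _ : 'rV[K]_n => True) n.
Proof.
split; first by do 2 split.
exists (fun j => 'e_j); split => //; split; last first.
  by move=> x _; exists (fun j => x 0 j); exact: row_sum_delta.
move=> c c0 j; have := congr1 (fun x : 'rV[K]_n => x 0 j) c0.
rewrite /= summxE mxE (bigD1 j) //= big1 => [|i /negbTE ij]; last first.
  by rewrite !mxE eq_sym ij andbF mulr0.
by rewrite !mxE !eqxx mulr1 addr0.
Qed.

Lemma has_dim0 : has_dim (fun x : 'rV[K]_n => x = 0) 0.
Proof.
split.
  by split => //; split => [x y -> ->|a x ->]; rewrite ?addr0 ?scaler0.
exists (fun _ => 0); split => //; split; first by move=> c _ [].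
by move=> x ->; exists (fun _ => 0); rewrite big_ord0.
Qed.

Lemma has_dim_sseq X Y d :
  is_subspace X -> incl X Y -> incl Y X -> has_dim Y d -> has_dim X d.
Proof.
move=> Xs XY YX [_ [v [vY [v_free v_span]]]]; split => //.
by exists v; split => [i|]; [apply: YX | split => // x /XY/v_span].
Qed.

Lemma subspace_has_dim X : is_subspace X -> exists d, has_dim X d.
Proof.
move=> Xs; apply: NNPP => no_dim.
suff /(_ n.+1) [Y [hY _]] : forall j, exists Y, has_dim Y j /\ incl Y X.
  by have := has_dim_leq hY has_dim_full (fun _ _ => I); rewrite ltnn.
elim=> [|j [Y [hY YX]]].
  exists (fun x => x = 0); split; first exact: has_dim0.
  by move=> _ ->; exact: Xs.1.
case: (classic (incl X Y)) => [XY|].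
  by case: no_dim; exists j; apply: has_dim_sseq hY.
move=> /(not_all_ex_not _ _) [z zXY].
have [Xz Yz_n] := imply_to_and _ _ zXY.
exists (adjoin Y z); split; first exact: has_dim_adjoin.
exact: adjoin_incl.
Qed.

Lemma scap_subspace X Y : is_subspace X -> is_subspace Y -> is_subspace (scap X Y).
Proof.
move=> [X0 [XD XZ]] [Y0 [YD YZ]]; split; first by split.
split => [x y [? ?] [? ?]|a x [? ?]]; split; by [apply: XD|apply: YD|apply: XZ|apply: YZ].
Qed.

Lemma adjoin_scap X W z x :
  is_subspace W -> W z -> W x -> adjoin X z x -> adjoin (scap X W) z x.
Proof.
move=> [_ [WD WZ]] Wz Wx [a [c [Xc ex]]]; exists a, c; do 2 split => //.
have -> : c = x + (-1) *: (a *: z) by rewrite ex scaleN1r addrK.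
by apply: WD => //; do 2 apply: (WZ).
Qed.

Lemma distinct_point U1 U2 j :
  has_dim U1 j -> has_dim U2 j -> ~ sseq U1 U2 -> exists x, U2 x /\ ~ U1 x.
Proof.
move=> h1 h2 U12_n.
have /(not_all_ex_not _ _) [x xU21] : ~ incl U2 U1.
  by move=> U21; apply: U12_n; split => //; apply: incl_same_dim h2 h1 U21.
by exists x; apply: imply_to_and.
Qed.

Lemma join_unique U1 U2 Y Z j :
  has_dim U1 j -> has_dim U2 j -> ~ sseq U1 U2 -> has_dim Y j.+1 -> has_dim Z j.+1 ->
  incl U1 Y -> incl U2 Y -> incl U1 Z -> incl U2 Z -> incl Y Z.
Proof.
move=> h1 h2 U12_n hY hZ U1Y U2Y U1Z U2Z.
have [x [U2x U1x_n]] := distinct_point h1 h2 U12_n.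
move=> y /(hyperplane_adjoin h1 hY U1Y (U2Y _ U2x) U1x_n).
exact: adjoin_incl hZ.1 U1Z (U2Z _ U2x) y.
Qed.

Lemma meet_unique A C U1 U2 j :
  has_dim A j -> has_dim U1 j.+1 -> has_dim U2 j.+1 -> ~ sseq U1 U2 ->
  incl A U1 -> incl A U2 -> incl C U1 -> incl C U2 -> incl C A.
Proof.
move=> hA h1 h2 U12_n AU1 AU2 CU1 CU2 y Cy; apply: NNPP => Ay_n; apply: U12_n.
split=> x.
  move=> /(hyperplane_adjoin hA h1 AU1 (CU1 _ Cy) Ay_n).
  exact: adjoin_incl h2.1 AU2 (CU2 _ Cy) x.
move=> /(hyperplane_adjoin hA h2 AU2 (CU2 _ Cy) Ay_n).
exact: adjoin_incl h1.1 AU1 (CU1 _ Cy) x.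
Qed.

Lemma scap_hyperplane_dims X Y W j dX dY :
  is_subspace W -> has_dim X j -> has_dim Y j.+1 -> incl X Y ->
  has_dim (scap X W) dX -> has_dim (scap Y W) dY ->
  [/\ (dX <= dY)%N, (dY <= dX.+1)%N, (dY = dX.+1 -> incl Y (ssum X W))
    & (dY = dX -> incl (scap Y W) X)].
Proof.
move=> Ws hX hY XY hXW hYW.
have XW_YW : incl (scap X W) (scap Y W) by move=> x [Xx Wx]; split => //; apply: XY.
have le_dXY := has_dim_leq hXW hYW XW_YW.
have YW_X (e : dY = dX) : incl (scap Y W) X.
  by rewrite e in hYW; move=> x /(incl_same_dim hXW hYW XW_YW) [].
case: (classic (incl (scap Y W) X)) => [YWX|/(not_all_ex_not _ _) [z zYWX]].
  have le_dYX : (dY <= dX)%N.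
    by apply: has_dim_leq hYW hXW _ => x [Yx Wx]; split => //; apply: YWX.
  by split => // [|e]; [exact: leqW | move: le_dYX; rewrite e ltnn].
have [[Yz Wz] Xz_n] := imply_to_and _ _ zYWX.
have YXz := hyperplane_adjoin hX hY XY Yz Xz_n.
split => // [|_ x /YXz [a [c [Xc ->]]]].
  apply: has_dim_leq hYW (has_dim_adjoin hXW (fun XWz => Xz_n XWz.1)) _ => x [Yx Wx].
  exact: adjoin_scap Ws Wz Wx (YXz _ Yx).
by exists c, (a *: z); do 2 split => //; apply: Ws.2.2.
Qed.

End Subspaces.

Lemma sseq_sym (K : unitRingType) (n : nat) (X Y : vsub K n) : sseq X Y -> sseq Y X.
Proof. by case. Qed.

Lemma sseq_trans (K : unitRingType) (n : nat) (X Y Z : vsub K n) :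
  sseq X Y -> sseq Y Z -> sseq X Z.
Proof.
by move=> [XY YX] [YZ ZY]; split => x ?; [apply: YZ; apply: XY | apply: YX; apply: ZY].
Qed.

Lemma three_pairwise_related (T : Type) (R S : T -> T -> Prop) x y z :
  (forall a b, R a b -> R b a) -> (forall a b c, R a b -> R b c -> R a c) ->
  (forall a b, S a b -> S b a) -> (forall a b c, S a b -> S b c -> S a c) ->
  R x y \/ S x y -> R x z \/ S x z -> R y z \/ S y z ->
  (R x y /\ R x z) \/ (S x y /\ S x z).
Proof.
move=> Rsym Rtr Ssym Str rxy rxz ryz.
case: (classic (R x y)) => [Rxy|Rxy_n]; case: (classic (R x z)) => [Rxz|Rxz_n].
- by left.
- have Sxz : S x z by case: rxz.
  have Syz : S y z by case: ryz => // Ryz; case: Rxz_n; exact: Rtr Rxy Ryz.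
  by right; split => //; exact: Str Sxz (Ssym _ _ Syz).
- have Sxy : S x y by case: rxy.
  have Syz : S y z by case: ryz => // Ryz; case: Rxy_n; exact: Rtr Rxz (Rsym _ _ Ryz).
  by right; split => //; exact: Str Sxy Syz.
- by right; split; [case: rxy | case: rxz].
Qed.

Lemma eq_or_eqS (a b : nat) : (a <= b)%N -> (b <= a.+1)%N -> b = a \/ b = a.+1.
Proof.
move=> le_ab; rewrite leq_eqVlt ltnS => /orP[/eqP|le_ba]; first by right.
by left; apply/eqP; rewrite eqn_leq le_ba le_ab.
Qed.

Section SpineSpace.
Variables (K : unitRingType) (n k m : nat) (W : vsub K n).
Hypothesis divK : division_ring K.
Hypothesis W_subspace : is_subspace W.
Hypothesis k_gt0 : (0 < k)%N.
Implicit Types (H B Y Z U : vsub K n).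

Lemma Mline_plane_closure H B Y Z :
  is_Mline k W m H B -> line_in_plane k W m H B Y Z ->
  (has_dim Z (k + 1) -> sseq B Z) /\ (has_dim Y (k - 1) -> sseq H Y).
Proof.
move=> [[hH [hB _]] [U1 [U2 [l1 [l2 U12_n]]]]] LYZ.
have [[h1 [HU1 U1B]] _] := l1; have [[h2 [HU2 U2B]] _] := l2.
have [_ [YU1 U1Z]] := LYZ _ l1; have [_ [YU2 U2Z]] := LYZ _ l2.
split => [hZ|hY].
  rewrite addn1 in hB hZ.
  by split; apply: (join_unique divK h1 h2 U12_n).
rewrite -[k](@prednK k) // -subn1 in h1 h2.
by split; apply: (meet_unique divK _ h1 h2 U12_n).
Qed.

Lemma coplanar_Mlines_share H B H' B' :
  is_Mline k W m H B -> is_Mline k W m H' B' -> coplanar k W m H B H' B' ->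
  sseq H H' \/ sseq B B'.
Proof.
move=> L L' [Y [Z [[[_ plane_dims] _] [LYZ L'YZ]]]].
have [BZ HY] := Mline_plane_closure L LYZ.
have [B'Z H'Y] := Mline_plane_closure L' L'YZ.
case: plane_dims => [[_ hZ]|[hY _]].
  by right; apply: sseq_trans (BZ hZ) (sseq_sym (B'Z hZ)).
by left; apply: sseq_trans (HY hY) (sseq_sym (H'Y hY)).
Qed.

Lemma star_through H U0 :
  has_dim H (k - 1) -> in_S k W m U0 -> incl H U0 ->
  exists X, is_star k W m X /\ forall U, in_S k W m U -> incl H U -> X U.
Proof.
move=> hH SU0 HU0.
have [d hHW] := subspace_has_dim divK (scap_subspace hH.1 W_subspace).
have hU U : in_S k W m U -> has_dim U (k - 1).+1 by move=> [hU _]; rewrite subn1 prednK.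
have dims U (SU : in_S k W m U) (HU : incl H U) :=
  scap_hyperplane_dims divK W_subspace hH (hU U SU) HU hHW SU.2.
have [le_dm le_md _ _] := dims U0 SU0 HU0.
have [e|e] := eq_or_eqS le_dm le_md.
  exists (fun U => in_S k W m U /\ incl H U); split => //.
  by right; exists H; rewrite e.
exists (fun U => has_dim U k /\ incl H U /\ incl U (ssum H W)); split.
  by left; exists H, d.
move=> U SU HU; have [_ _ sub _] := dims U SU HU.
by split; [exact: SU.1 | split; last exact: sub].
Qed.

Lemma top_through B U0 :
  has_dim B (k + 1) -> in_S k W m U0 -> incl U0 B ->
  exists X, is_top k W m X /\ forall U, in_S k W m U -> incl U B -> X U.
Proof.
move=> hB SU0 U0B.
have [d hBW] := subspace_has_dim divK (scap_subspace hB.1 W_subspace).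
have hB' : has_dim B k.+1 by rewrite -addn1.
have dims U (SU : in_S k W m U) (UB : incl U B) :=
  scap_hyperplane_dims divK W_subspace SU.1 hB' UB SU.2 hBW.
have [le_md le_dm _ _] := dims U0 SU0 U0B.
have [e|e] := eq_or_eqS le_md le_dm.
  exists (fun U => has_dim U k /\ incl (scap B W) U /\ incl U B); split.
    by left; exists B; rewrite -e.
  move=> U SU UB; have [_ _ _ sub] := dims U SU UB.
  by split; [exact: SU.1 | split; first exact: sub].
exists (fun U => in_S k W m U /\ incl U B); split => //.
by right; exists B; rewrite -e.
Qed.

End SpineSpace.

Unset Implicit Arguments.
Local Close Scope ring_scope.

Theorem lemma1p2 (K : unitRingType) (n k : nat) (W : vsub K n) (w m : nat)
  (H1 B1 H2 B2 H3 B3 : vsub K n) :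
  division_ring K ->
  (3 <= n)%N -> (1 < k)%N -> (k < n - 1)%N ->
  has_dim W w ->
  (k + w <= m + n)%N -> (m <= minn k w)%N ->
  is_Mline k W m H1 B1 -> is_Mline k W m H2 B2 -> is_Mline k W m H3 B3 ->
  coplanar k W m H1 B1 H2 B2 ->
  coplanar k W m H1 B1 H3 B3 ->
  coplanar k W m H2 B2 H3 B3 ->
  (exists U, pencil k H1 B1 U /\ pencil k H2 B2 U /\ pencil k H3 B3 U) ->
  ~ (exists Y Z, is_Mplane k W m Y Z /\
       line_in_plane k W m H1 B1 Y Z /\ line_in_plane k W m H2 B2 Y Z /\
       line_in_plane k W m H3 B3 Y Z) ->
  exists X : vsub K n -> Prop,
    (is_star k W m X \/ is_top k W m X) /\
    (forall U, lineset k W m H1 B1 U -> X U) /\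
    (forall U, lineset k W m H2 B2 U -> X U) /\
    (forall U, lineset k W m H3 B3 U -> X U).
Proof.
move=> divK _ k_gt1 _ hW _ _ L1 L2 L3 c12 c13 c23 _ _.
have k_gt0 : 0 < k by apply: ltnW.
have [U0 [_ [[[_ [H1U0 U0B1]] SU0] _]]] := L1.2.
have := @three_pairwise_related _ (fun L L' => sseq L.1 L'.1) (fun L L' => sseq L.2 L'.2)
  (H1, B1) (H2, B2) (H3, B3)
  (fun _ _ => @sseq_sym _ _ _ _) (fun _ _ _ => @sseq_trans _ _ _ _ _)
  (fun _ _ => @sseq_sym _ _ _ _) (fun _ _ _ => @sseq_trans _ _ _ _ _)
  (coplanar_Mlines_share divK k_gt0 L1 L2 c12) (coplanar_Mlines_share divK k_gt0 L1 L3 c13)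
  (coplanar_Mlines_share divK k_gt0 L2 L3 c23).
case=> /= [[H12 H13]|[B12 B13]].
- have [X [starX X_H1]] := star_through divK hW.1 k_gt0 L1.1.1 SU0 H1U0.
  have X_line H B : incl H1 H -> forall U, lineset k W m H B U -> X U.
    by move=> H1H U [[_ [HU _]] SU]; apply: X_H1 => // x /H1H /HU.
  exists X; split; first by left.
  by split; [|split]; apply: X_line => //; [apply: H12.1 | apply: H13.1].
- have [X [topX X_B1]] := top_through divK hW.1 L1.1.2.1 SU0 U0B1.
  have X_line H B : incl B B1 -> forall U, lineset k W m H B U -> X U.
    by move=> BB1 U [[_ [_ UB]] SU]; apply: X_B1 => // x /UB /BB1.
  exists X; split; first by right.
  by split; [|split]; apply: X_line => //; [apply: B12.2 | apply: B13.2].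
Qed.
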